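(* Let $a,b,c,d\in\mathbb{R}^2$ be points such that the segments $ab$ and $cd$ cross at a point $x$. Suppose that $|ab|\ge 2$, $|cd|\ge 2$, $|ax|\le|xb|$, $|cx|\le |xd|$, and $\angle axc\le 1^\circ$. Then $\max\{|ab|,|cd|\}\ge \max\{|ac|,|bd|\}+0.5$.
   Context: $|uv|$ denotes the Euclidean distance between points $u,v$. *)

From Stdlib Require Import Reals Lra.
Open Scope R_scope.

Definition pt := (R * R)%type.

Definition edist (u v : pt) : R :=
  sqrt ((fst u - fst v)^2 + (snd u - snd v)^2).

Definition in_open_seg (x u v : pt) : Prop :=
  exists s : R, 0 < s < 1 /\
    x = ((1 - s) * fst u + s * fst v, (1 - s) * snd u + s * snd v).

(* The segments ab and cd cross at x: x is an interior point of both,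
   and the segments are not parallel (so x is their unique common point). *)
Definition segs_cross_at (a b c d x : pt) : Prop :=
  in_open_seg x a b /\ in_open_seg x c d /\
  (fst b - fst a) * (snd d - snd c) - (snd b - snd a) * (fst d - fst c) <> 0.

Definition angle (u x v : pt) : R :=
  acos (((fst u - fst x) * (fst v - fst x) + (snd u - snd x) * (snd v - snd x))
        / (edist u x * edist v x)).

(* Write s = |ax|/|ab| and t = |cx|/|cd|, so that s, t <= 1/2, and let M = max(|ab|, |cd|) >= 2.
   The angles axc and bxd are vertical angles with common cosine k >= cos 1° >= 9/10, so by
   the law of cosines |ac|^2 = p^2 + q^2 - 2kpq with legs p = |ax|, q = |cx| in [0, M/2],
   and |bd|^2 = p^2 + q^2 - 2kpq with legs p = |bx|, q = |dx| in [1, M].  Elementary bounds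
   on this quadratic form give |ac|, |bd| <= M - 1/2 in both regimes. *)
From Stdlib Require Import Reals Lra Psatz.
Open Scope R_scope.

Definition vsub (u v : pt) : pt := (fst u - fst v, snd u - snd v).
Definition vscale (l : R) (p : pt) : pt := (l * fst p, l * snd p).
Definition dot (p q : pt) : R := fst p * fst q + snd p * snd q.
Definition norm (p : pt) : R := sqrt (fst p ^ 2 + snd p ^ 2).

Definition cos_angle (u x v : pt) : R :=
  dot (vsub u x) (vsub v x) / (norm (vsub u x) * norm (vsub v x)).

Lemma edist_norm (u v : pt) : edist u v = norm (vsub u v).
Proof. reflexivity. Qed.

Lemma angle_acos (u x v : pt) : angle u x v = acos (cos_angle u x v).
Proof. reflexivity. Qed.

Lemma edist_sym (u v : pt) : edist u v = edist v u.
Proof. unfold edist; f_equal; ring. Qed.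

Lemma norm_sq (p : pt) : norm p ^ 2 = dot p p.
Proof.
  unfold norm, dot; rewrite pow2_sqrt by nra; ring.
Qed.

Lemma norm_vscale (l : R) (p : pt) : norm (vscale l p) = Rabs l * norm p.
Proof.
  unfold norm, vscale; cbn [fst snd].
  replace ((l * fst p) ^ 2 + (l * snd p) ^ 2) with (l ^ 2 * (fst p ^ 2 + snd p ^ 2)) by ring.
  rewrite sqrt_mult_alt by nra.
  now rewrite <- sqrt_Rsqr_abs, Rsqr_pow2.
Qed.

Lemma dot_vscale (l m : R) (p q : pt) :
  dot (vscale l p) (vscale m q) = l * m * dot p q.
Proof. unfold dot, vscale; cbn [fst snd]; ring. Qed.

Lemma cos_angle_vscale {u x v p q : pt} {l m : R} :
  vsub u x = vscale l p -> vsub v x = vscale m q -> 0 < l * m ->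
  cos_angle u x v = dot p q / (norm p * norm q).
Proof.
  intros Hu Hv Hlm.
  unfold cos_angle; rewrite Hu, Hv, dot_vscale, !norm_vscale.
  replace (Rabs l * norm p * (Rabs m * norm q)) with (l * m * (norm p * norm q))
    by (rewrite <- (Rabs_pos_eq (l * m)), Rabs_mult by lra; ring).
  unfold Rdiv; rewrite Rinv_mult.
  (* Hidden from [field], so that no nonvanishing of the norms is required. *)
  set (inv_norms := / (norm p * norm q)).
  field; split; intros ->; lra.
Qed.

Lemma law_of_cosines (u x v : pt) :
  0 < edist u x -> 0 < edist v x ->
  edist u v ^ 2 = edist u x ^ 2 + edist v x ^ 2
                  - 2 * cos_angle u x v * edist u x * edist v x.
Proof.
  rewrite !edist_norm; intros Hu Hv.
  unfold cos_angle.
  replace (2 * (dot (vsub u x) (vsub v x) / (norm (vsub u x) * norm (vsub v x)))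
           * norm (vsub u x) * norm (vsub v x))
    with (2 * dot (vsub u x) (vsub v x)) by (field; lra).
  rewrite !norm_sq; unfold dot, vsub; cbn [fst snd]; ring.
Qed.

Lemma edist_vscale {u x p : pt} {l : R} :
  vsub u x = vscale l p -> edist u x = Rabs l * norm p.
Proof. intros Hu; now rewrite edist_norm, Hu, norm_vscale. Qed.

Lemma open_seg_vsub {x a b : pt} :
  in_open_seg x a b ->
  exists s, 0 < s < 1 /\
    vsub a x = vscale s (vsub a b) /\
    vsub b x = vscale (s - 1) (vsub a b) /\
    edist a x = s * edist a b /\ edist b x = (1 - s) * edist a b.
Proof.
  intros [s [Hs Hx]].
  assert (Hax : vsub a x = vscale s (vsub a b))
    by (rewrite Hx; unfold vsub, vscale; cbn [fst snd]; f_equal; ring).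
  assert (Hbx : vsub b x = vscale (s - 1) (vsub a b))
    by (rewrite Hx; unfold vsub, vscale; cbn [fst snd]; f_equal; ring).
  exists s; repeat split; try lra; try assumption.
  - now rewrite (edist_vscale Hax), Rabs_pos_eq by lra.
  - rewrite (edist_vscale Hbx), Rabs_left by lra; rewrite <- edist_norm; ring.
Qed.

Lemma cos_le_of_acos_le (y th : R) : 0 <= th < PI -> acos y <= th -> cos th <= y.
Proof.
  intros Hth Hacos.
  destruct (Rle_dec y (-1)) as [Hy|Hy].
  { unfold acos in Hacos; destruct (Rle_dec y (-1)); [lra | contradiction]. }
  destruct (Rle_dec 1 y) as [Hy'|Hy']; [pose proof (COS_bound th); lra|].
  rewrite <- (cos_acos y) by lra.
  pose proof (acos_bound y).
  apply cos_decr_1; lra.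
Qed.

Lemma cos_one_degree_ge : 9 / 10 <= cos (PI / 180).
Proof.
  pose proof PI_4; pose proof PI_RGT_0.
  destruct (cos_bound (PI / 180) 0) as [Hlow _]; [lra | lra |].
  unfold cos_approx, cos_term in Hlow; simpl in Hlow.
  nra.
Qed.

Lemma sq_third_side_le_of_short_legs (m p q k : R) :
  0 <= p <= m -> 0 <= q <= m -> 1 / 2 <= k ->
  p ^ 2 + q ^ 2 - 2 * k * p * q <= m ^ 2.
Proof.
  intros Hp Hq Hk.
  assert (0 <= p * q * (2 * k - 1)) by (apply Rmult_le_pos; nra).
  destruct (Rle_dec p q); nra.
Qed.

Lemma sq_third_side_le_of_long_legs (M p q k : R) :
  1 <= p <= M -> 1 <= q <= M -> 9 / 10 <= k ->
  p ^ 2 + q ^ 2 - 2 * k * p * q <= (M - 1 / 2) ^ 2.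
Proof.
  (* For fixed p the form is convex in q, so on [1, p] it peaks at q = 1 or q = p. *)
  assert (Hwlog : forall p q, 1 <= q <= p -> p <= M -> 9 / 10 <= k ->
            p ^ 2 + q ^ 2 - 2 * k * p * q <= (M - 1 / 2) ^ 2).
  { intros p' q' Hq Hp Hk.
    assert (0 <= p' * q' * (k - 9 / 10)) by (apply Rmult_le_pos; nra).
    assert (p' * (1 - 18 / 10 * q') <= q' * (1 - 18 / 10 * q')) by nra.
    nra. }
  intros Hp Hq Hk.
  destruct (Rle_dec q p).
  - apply Hwlog; lra.
  - replace (p ^ 2 + q ^ 2 - 2 * k * p * q) with (q ^ 2 + p ^ 2 - 2 * k * q * p) by ring.
    apply Hwlog; lra.
Qed.

Theorem lemma1 (a b c d x : pt) :
  segs_cross_at a b c d x ->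
  edist a b >= 2 -> edist c d >= 2 ->
  edist a x <= edist x b -> edist c x <= edist x d ->
  angle a x c <= PI / 180 ->
  Rmax (edist a b) (edist c d) >= Rmax (edist a c) (edist b d) + 0.5.
Proof.
  intros [Hxab [Hxcd _]] Hab Hcd Hax Hcx Hang.
  destruct (open_seg_vsub Hxab) as [s [Hs [Hxa [Hxb [Eax Ebx]]]]].
  destruct (open_seg_vsub Hxcd) as [t [Ht [Hxc [Hxd [Ecx Edx]]]]].
  rewrite (edist_sym x b), Eax, Ebx in Hax; rewrite (edist_sym x d), Ecx, Edx in Hcx.
  set (k := dot (vsub a b) (vsub c d) / (edist a b * edist c d)).
  assert (Hkac : cos_angle a x c = k) by (apply (cos_angle_vscale Hxa Hxc); nra).
  assert (Hkbd : cos_angle b x d = k) by (apply (cos_angle_vscale Hxb Hxd); nra).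
  assert (Hk : 9 / 10 <= k).
  { pose proof cos_one_degree_ge; pose proof PI_RGT_0.
    rewrite angle_acos, Hkac in Hang.
    enough (cos (PI / 180) <= k) by lra.
    apply cos_le_of_acos_le; lra. }
  set (M := Rmax (edist a b) (edist c d)).
  assert (HM : edist a b <= M /\ edist c d <= M) by (split; [apply Rmax_l | apply Rmax_r]).
  assert (Hac : edist a c ^ 2 <= (M - 1 / 2) ^ 2).
  { rewrite (law_of_cosines a x c), Hkac, Eax, Ecx by nra.
    apply Rle_trans with ((M / 2) ^ 2); [|nra].
    apply sq_third_side_le_of_short_legs; nra. }
  assert (Hbd : edist b d ^ 2 <= (M - 1 / 2) ^ 2).
  { rewrite (law_of_cosines b x d), Hkbd, Ebx, Edx by nra.
    apply sq_third_side_le_of_long_legs; nra. }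
  assert (0 <= edist a c /\ 0 <= edist b d) by (split; apply sqrt_pos).
  enough (Rmax (edist a c) (edist b d) <= M - 1 / 2) by lra.
  apply Rmax_lub; nra.
Qed.
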